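(* Let $-\infty<a<b<\infty$, $f:[a,b]\times\mathbb{R}^N\times\mathbb{R}^N\to\mathbb{R}$ of class $C^1$, $\Phi(u)=\int_a^bf(x,u(x),u'(x))dx$, $u^0\in C^1([a,b],\mathbb{R}^N)$, $I^{D}_a,I^{D}_b\subset\{1,\dots,N\}$, $I^{N}_x=\{1,\dots,N\}\setminus I^{D}_x$, and $\mathcal{M}=\{u\in C^1([a,b],\mathbb{R}^N):(u_i-u^0_i)(x)=0\text{ for } i\in I^{D}_x,\ x\in\{a,b\}\}$, $\mathcal{M}_N=\{u\in\mathcal{M}: u_i'(x)=0\text{ for } i\in I^{N}_x,\ x\in\{a,b\}\}$. If $u^0$ is a weak minimizer of $\Phi$ in $\mathcal{M}_N$, then $u^0$ is a weak minimizer of $\Phi$ in $\mathcal{M}$. Conversely, if $u^0$ is a weak minimizer of $\Phi$ in $\mathcal{M}$ and $u^0\in\mathcal{M}_N$, then $u^0$ is a weak minimizer of $\Phi$ in $\mathcal{M}_N$.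
   Context: A function $w$ in a set $\mathcal{S}\subset C^1([a,b],\mathbb{R}^N)$ is a weak minimizer of $\Phi$ in $\mathcal{S}$ if there is $\varepsilon>0$ with $\Phi(v)\ge\Phi(w)$ for all $v\in\mathcal{S}$ with $\|v-w\|_{C^1}<\varepsilon$, where $\|v\|_{C^1}=\max|v|+\max|v'|$. *)

From Stdlib Require Import Reals.
From Coquelicot Require Import Coquelicot.
From mathcomp Require Import ssreflect ssrbool eqtype ssrnat seq fintype.
Open Scope R_scope.

Definition vec (N : nat) := 'I_N -> R.

Definition vnorm {N : nat} (v : vec N) : R :=
  sqrt (foldr Rplus 0 (map (fun i => (v i) ^ 2) (enum 'I_N))).

Definition in_ab (a b x : R) : Prop := a <= x <= b.

Definition has_wderiv (a b : R) (g : R -> R) (x l : R) : Prop :=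
  filterlim (fun y => (g y - g x) / (y - x))
    (within (fun y => in_ab a b y /\ y <> x) (locally x)) (locally l).

Definition cont_on (a b : R) (g : R -> R) : Prop :=
  forall x, in_ab a b x ->
    filterlim g (within (in_ab a b) (locally x)) (locally (g x)).

Definition is_C1 {N : nat} (a b : R) (u u' : R -> vec N) : Prop :=
  forall i : 'I_N,
    (forall x, in_ab a b x -> has_wderiv a b (fun t => u t i) x (u' x i)) /\
    cont_on a b (fun t => u' t i).

Definition supnorm {N : nat} (a b : R) (g : R -> vec N) : R :=
  real (Lub_Rbar (fun r => exists x, in_ab a b x /\ r = vnorm (g x))).

Definition C1dist {N : nat} (a b : R) (v v' w w' : R -> vec N) : R :=
  supnorm a b (fun x i => v x i - w x i) + supnorm a b (fun x i => v' x i - w' x i).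

Definition shift {N : nat} (y : vec N) (i : 'I_N) (t : R) : vec N :=
  fun j => if j == i then y j + t else y j.

Definition cont_dom {N : nat} (a b : R) (g : R -> vec N -> vec N -> R) : Prop :=
  forall x y p, in_ab a b x -> forall eps, 0 < eps -> exists delta, 0 < delta /\
    forall x' y' p', in_ab a b x' -> Rabs (x' - x) < delta ->
      (forall i, Rabs (y' i - y i) < delta) -> (forall i, Rabs (p' i - p i) < delta) ->
      Rabs (g x' y' p' - g x y p) < eps.

Definition is_C1_lagr {N : nat} (a b : R) (f : R -> vec N -> vec N -> R) : Prop :=
  cont_dom a b f /\
  exists (fx : R -> vec N -> vec N -> R) (fy fp : 'I_N -> R -> vec N -> vec N -> R),
    cont_dom a b fx /\ (forall i, cont_dom a b (fy i)) /\ (forall i, cont_dom a b (fp i)) /\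
    forall x y p, in_ab a b x ->
      has_wderiv a b (fun t => f t y p) x (fx x y p) /\
      (forall i, is_derive (fun t => f x (shift y i t) p) 0 (fy i x y p)) /\
      (forall i, is_derive (fun t => f x y (shift p i t)) 0 (fp i x y p)).

Definition Phi {N : nat} (f : R -> vec N -> vec N -> R) (a b : R) (u u' : R -> vec N) : R :=
  RInt (fun x => f x (u x) (u' x)) a b.

Definition in_M {N : nat} (a b : R) (IDa IDb : 'I_N -> bool) (u0 : R -> vec N)
  (u u' : R -> vec N) : Prop :=
  is_C1 a b u u' /\
  forall i, (IDa i -> u a i - u0 a i = 0) /\ (IDb i -> u b i - u0 b i = 0).

Definition in_MN {N : nat} (a b : R) (IDa IDb : 'I_N -> bool) (u0 : R -> vec N)
  (u u' : R -> vec N) : Prop :=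
  in_M a b IDa IDb u0 u u' /\
  forall i, (~~ IDa i -> u' a i = 0) /\ (~~ IDb i -> u' b i = 0).

Definition weak_min {N : nat} (f : R -> vec N -> vec N -> R) (a b : R)
  (S : (R -> vec N) -> (R -> vec N) -> Prop) (w w' : R -> vec N) : Prop :=
  S w w' /\
  exists eps, 0 < eps /\
    forall v v', S v v' -> C1dist a b v v' w w' < eps -> Phi f a b w w' <= Phi f a b v v'.

From Stdlib Require Import Reals Lra Psatz FunctionalExtensionality IndefiniteDescription.
From Coquelicot Require Import Coquelicot.
From mathcomp Require Import ssreflect ssrbool eqtype ssrnat seq fintype.
Open Scope R_scope.

(* Since M_N is contained in M, only the first implication has content.  Suppose v in M is
   C^1-close to u0 and Phi(v) < Phi(u0).  For small d > 0, subtract from v near each endpoint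
   the profile d * bump(dist / d) * c, where c is the Neumann part of v' at that endpoint and
   bump(t) = t (1 - t)_+^2, so that bump(0) = 0, bump'(0) = 1 and bump vanishes on [1, oo).
   The corrected function lies in M_N.  Its C^1 distance to u0 is at most a constant times that
   of v, because u0' vanishes at the endpoints in the Neumann coordinates, whence |c| is bounded
   by |v' - u0'|.  Its action differs from Phi(v) by O(d), because the integrands differ only on
   two intervals of length d, on which they stay bounded by continuity of f near the compact
   segment of slopes swept by the correction.  For d small this contradicts the minimality of
   u0 in M_N. *)

(** * Continuity and one-sided derivatives on [a, b] *)

Lemma filterlim_within_eps (D : R -> Prop) (g : R -> R) (x l : R) :
  filterlim g (within D (locally x)) (locally l) <->
  forall eps, 0 < eps -> exists d, 0 < d /\
    forall y, D y -> Rabs (y - x) < d -> Rabs (g y - l) < eps.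
Proof.
  rewrite filterlim_locally; split.
  - move=> H eps Heps; have [d Hd] := H (mkposreal eps Heps).
    by exists d; split; [apply: cond_pos | move=> y Dy Hy; exact: Hd].
  - move=> H [eps Heps]; have [d [Hd0 Hd]] := H eps Heps.
    by exists (mkposreal d Hd0) => y Hy Dy; apply: Hd.
Qed.

Lemma has_wderiv_eps (a b : R) (g : R -> R) (x l : R) :
  has_wderiv a b g x l <->
  forall eps, 0 < eps -> exists d, 0 < d /\ forall y, in_ab a b y -> y <> x ->
    Rabs (y - x) < d -> Rabs ((g y - g x) / (y - x) - l) < eps.
Proof.
  rewrite /has_wderiv filterlim_within_eps; split.
  - move=> H eps Heps; have [d [Hd0 Hd]] := H eps Heps.
    by exists d; split=> // y Hy Hyx; apply: Hd.
  - move=> H eps Heps; have [d [Hd0 Hd]] := H eps Heps.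
    by exists d; split=> // y [Hy Hyx]; apply: Hd.
Qed.

Lemma cont_on_eps (a b : R) (g : R -> R) :
  cont_on a b g <-> forall x, in_ab a b x -> forall eps, 0 < eps -> exists d, 0 < d /\
    forall y, in_ab a b y -> Rabs (y - x) < d -> Rabs (g y - g x) < eps.
Proof.
  split=> H x Hx; first by apply/filterlim_within_eps; exact: H.
  by apply/filterlim_within_eps; exact: H.
Qed.

Lemma has_wderiv_cont_on (a b : R) (g g' : R -> R) :
  (forall x, in_ab a b x -> has_wderiv a b g x (g' x)) -> cont_on a b g.
Proof.
  move=> Hg; apply/cont_on_eps => x Hx eps Heps.
  have [d [Hd K]] := proj1 (has_wderiv_eps _ _ _ _ _) (Hg x Hx) 1 Rlt_0_1.
  have HL : 0 < Rabs (g' x) + 1 by have := Rabs_pos (g' x); lra.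
  exists (Rmin d (eps / (Rabs (g' x) + 1))); split.
  { by apply: Rmin_pos => //; apply: Rdiv_lt_0_compat. }
  move=> y Hy Hyd; have [->|Hyx] := Req_dec y x.
  { by rewrite Rminus_eq_0 Rabs_R0. }
  have Hq := K y Hy Hyx (Rlt_le_trans _ _ _ Hyd (Rmin_l _ _)).
  have Hq' : Rabs ((g y - g x) / (y - x)) <= Rabs (g' x) + 1.
  { have := Rabs_triang_inv ((g y - g x) / (y - x)) (g' x); lra. }
  have Hyd' : Rabs (y - x) * (Rabs (g' x) + 1) < eps.
  { by apply/(Rlt_div_r _ _ _ HL); apply: Rlt_le_trans Hyd (Rmin_r _ _). }
  have -> : g y - g x = (g y - g x) / (y - x) * (y - x) by field; lra.
  rewrite Rabs_mult; have := Rabs_pos (y - x); nra.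
Qed.

Lemma has_wderiv_plus_derive (a b : R) (g h : R -> R) (x l l' : R) :
  has_wderiv a b g x l -> is_derive h x l' ->
  has_wderiv a b (fun t => g t + h t) x (l + l').
Proof.
  move=> /has_wderiv_eps Hg /is_derive_Reals Hh; apply/has_wderiv_eps => eps Heps.
  have [d1 [Hd1 K1]] := Hg (eps / 2) ltac:(lra).
  have [[d2 Hd2] K2] := Hh (eps / 2) ltac:(lra).
  exists (Rmin d1 d2); split; first exact: Rmin_pos.
  move=> y Hy Hyx Hyd.
  have := K1 y Hy Hyx (Rlt_le_trans _ _ _ Hyd (Rmin_l _ _)).
  have := K2 (y - x) ltac:(lra) (Rlt_le_trans _ _ _ Hyd (Rmin_r _ _)).
  have -> : x + (y - x) = y by ring.
  have -> : (g y + h y - (g x + h x)) / (y - x) - (l + l') =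
            ((g y - g x) / (y - x) - l) + ((h y - h x) / (y - x) - l') by field; lra.
  have := Rabs_triang ((g y - g x) / (y - x) - l) ((h y - h x) / (y - x) - l'); lra.
Qed.

Lemma cont_on_plus (a b : R) (g h : R -> R) :
  cont_on a b g -> cont_on a b h -> cont_on a b (fun t => g t + h t).
Proof.
  move=> Hg Hh x Hx; apply: (filterlim_comp_2 _ _ Rplus (Hg x Hx) (Hh x Hx)).
  exact: (@filterlim_plus _ R_NormedModule).
Qed.

Lemma cont_on_opp (a b : R) (g : R -> R) :
  cont_on a b g -> cont_on a b (fun t => - g t).
Proof.
  move=> Hg x Hx; apply: (filterlim_comp _ _ _ g Ropp _ _ _ (Hg x Hx)).
  exact: (@filterlim_opp _ R_NormedModule).
Qed.

Lemma cont_on_minus (a b : R) (g h : R -> R) :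
  cont_on a b g -> cont_on a b h -> cont_on a b (fun t => g t - h t).
Proof. by move=> Hg Hh; apply: cont_on_plus Hg (cont_on_opp _ _ _ Hh). Qed.

Lemma continuous_cont_on (a b : R) (h : R -> R) :
  (forall x, continuous h x) -> cont_on a b h.
Proof. by move=> Hh x _; apply: filterlim_filter_le_1 (Hh x); apply: filter_le_within. Qed.

Lemma is_C1_cont_on {N : nat} (a b : R) (u u' : R -> vec N) (i : 'I_N) :
  is_C1 a b u u' -> cont_on a b (fun t => u t i) /\ cont_on a b (fun t => u' t i).
Proof.
  move=> /(_ i) [Hd Hc]; split=> //.
  exact: (has_wderiv_cont_on _ _ _ (fun t => u' t i)).
Qed.

Definition add_fun {N : nat} (u h : R -> vec N) : R -> vec N := fun x i => u x i + h x i.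

Lemma is_C1_add_smooth {N : nat} (a b : R) (u u' h h' : R -> vec N) :
  is_C1 a b u u' ->
  (forall i x, is_derive (fun t => h t i) x (h' x i)) ->
  (forall i x, continuous (fun t => h' t i) x) ->
  is_C1 a b (add_fun u h) (add_fun u' h').
Proof.
  move=> Hu Hh Hh' i; have [Hud Huc] := Hu i; split.
  - by move=> x Hx; apply: has_wderiv_plus_derive; [exact: Hud | exact: Hh].
  - by apply: cont_on_plus Huc (continuous_cont_on _ _ _ (Hh' i)).
Qed.

(** * Continuous functions on a segment *)

Definition clamp (a b x : R) : R := Rmin b (Rmax a x).

Lemma clamp_in (a b x : R) : a <= b -> in_ab a b (clamp a b x).
Proof. rewrite /clamp /in_ab /Rmin /Rmax => ?; repeat case: Rle_dec; lra. Qed.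

Lemma clamp_id (a b x : R) : in_ab a b x -> clamp a b x = x.
Proof. rewrite /clamp /in_ab /Rmin /Rmax => ?; repeat case: Rle_dec; lra. Qed.

Lemma clamp_lipschitz (a b x y : R) :
  a <= b -> Rabs (clamp a b y - clamp a b x) <= Rabs (y - x).
Proof.
  rewrite /clamp /Rmin /Rmax /Rabs => ?.
  by repeat case: Rle_dec; repeat case: Rcase_abs; lra.
Qed.

Lemma cont_on_clamp (a b : R) (g : R -> R) (x : R) :
  a <= b -> cont_on a b g -> continuous (fun t => g (clamp a b t)) x.
Proof.
  move=> Hab /cont_on_eps Hg; apply/filterlim_locally => eps.
  have [d [Hd K]] := Hg _ (clamp_in a b x Hab) eps (cond_pos eps).
  exists (mkposreal d Hd) => y Hy; apply: K; first exact: clamp_in.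
  exact: Rle_lt_trans (clamp_lipschitz a b x y Hab) Hy.
Qed.

Lemma cont_on_ex_RInt (a b : R) (g : R -> R) :
  a <= b -> cont_on a b g -> ex_RInt g a b.
Proof.
  move=> Hab Hg; apply: (ex_RInt_ext (fun t => g (clamp a b t))).
  { rewrite Rmin_left // Rmax_right // => x Hx.
    by rewrite clamp_id //; rewrite /in_ab; lra. }
  apply: (@ex_RInt_continuous R_CompleteNormedModule) => z _.
  exact: cont_on_clamp.
Qed.

Lemma cont_on_bounded (a b : R) (g : R -> R) :
  a <= b -> cont_on a b g -> exists M, forall x, in_ab a b x -> Rabs (g x) <= M.
Proof.
  move=> Hab Hg.
  have Hc : forall t, a <= t <= b -> continuity_pt (fun t => Rabs (g (clamp a b t))) t.
  { move=> t _; apply: (continuity_pt_comp (fun t => g (clamp a b t)) Rabs).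
    - by apply/continuity_pt_filterlim; apply: cont_on_clamp.
    - exact: Rcontinuity_abs. }
  have [xM [HM _]] := continuity_ab_maj _ a b Hab Hc.
  exists (Rabs (g (clamp a b xM))) => x Hx.
  by rewrite -{1}(clamp_id a b x Hx); apply: HM.
Qed.

Lemma RInt_le_boundary_layers (g : R -> R) (a b d M : R) :
  0 <= d -> a + d <= b - d -> ex_RInt g a b ->
  (forall x, a <= x <= a + d -> Rabs (g x) <= M) ->
  (forall x, b - d <= x <= b -> Rabs (g x) <= M) ->
  (forall x, a + d < x < b - d -> g x = 0) ->
  RInt g a b <= 2 * d * M.
Proof.
  move=> Hd Hab Hg Ha Hb Hmid.
  have Ia : ex_RInt g a (a + d) by apply: (ex_RInt_Chasles_1 _ _ _ b) => //; lra.
  have Ir : ex_RInt g (a + d) b by apply: (ex_RInt_Chasles_2 _ a) => //; lra.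
  have Im : ex_RInt g (a + d) (b - d) by apply: (ex_RInt_Chasles_1 _ _ _ b) => //; lra.
  have Ib : ex_RInt g (b - d) b by apply: (ex_RInt_Chasles_2 _ (a + d)) => //; lra.
  rewrite -(RInt_Chasles g a (a + d) b Ia Ir) -(RInt_Chasles g (a + d) (b - d) b Im Ib).
  have -> : RInt g (a + d) (b - d) = 0.
  { rewrite (RInt_ext g (fun _ => 0)) ?RInt_const ?scal_zero_r // => x.
    by rewrite Rmin_left ?Rmax_right; [exact: Hmid | lra | lra]. }
  have Ea := abs_RInt_le_const g a (a + d) M ltac:(lra) Ia Ha.
  have Eb := abs_RInt_le_const g (b - d) b M ltac:(lra) Ib Hb.
  have := Rle_abs (RInt g a (a + d)); have := Rle_abs (RInt g (b - d) b).
  rewrite (_ : a + d - a = d) in Ea; last ring.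
  rewrite (_ : b - (b - d) = d) in Eb; last ring.
  rewrite /plus /=; lra.
Qed.

(** * The Euclidean norm and the sup norm *)

Definition sqsum {N : nat} (l : seq 'I_N) (x : vec N) : R :=
  foldr Rplus 0 (map (fun i => x i ^ 2) l).

Lemma sqsum_ge0 {N : nat} (l : seq 'I_N) (x : vec N) : 0 <= sqsum l x.
Proof.
  rewrite /sqsum; elim: l => [|i l IH]; cbn [foldr map]; last have := pow2_ge_0 (x i); lra.
Qed.

Lemma sqsum_le_compat {N : nat} (l : seq 'I_N) (x y : vec N) :
  (forall i, Rabs (x i) <= Rabs (y i)) -> sqsum l x <= sqsum l y.
Proof.
  move=> Hxy; rewrite /sqsum; elim: l => [|i l IH]; cbn [foldr map]; first lra.
  have : x i ^ 2 <= y i ^ 2.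
  { rewrite -(pow2_abs (x i)) -(pow2_abs (y i)); have := Hxy i; have := Rabs_pos (x i); nra. }
  lra.
Qed.

Lemma sqsum_scal {N : nat} (l : seq 'I_N) (r : R) (x : vec N) :
  sqsum l (fun i => r * x i) = r ^ 2 * sqsum l x.
Proof. by rewrite /sqsum; elim: l => [|i l IH]; cbn [foldr map]; [ring | rewrite IH; ring]. Qed.

Lemma sqsum_add_le {N : nat} (l : seq 'I_N) (x y : vec N) :
  sqsum l (fun i => x i + y i) <= 2 * sqsum l x + 2 * sqsum l y.
Proof.
  rewrite /sqsum; elim: l => [|i l IH]; cbn [foldr map]; first lra.
  have := pow2_ge_0 (x i - y i); nra.
Qed.

Lemma sq_le_sqsum {N : nat} (l : seq 'I_N) (x : vec N) (i : 'I_N) :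
  i \in l -> x i ^ 2 <= sqsum l x.
Proof.
  elim: l => [|j l IH] //; rewrite in_cons => /orP [/eqP ->|Hi].
  - by have := sqsum_ge0 l x; rewrite /sqsum; cbn [foldr map]; lra.
  - by have := IH Hi; have := pow2_ge_0 (x j); rewrite /sqsum; cbn [foldr map]; lra.
Qed.

Lemma vnormE {N : nat} (x : vec N) : vnorm x = sqrt (sqsum (enum 'I_N) x).
Proof. by []. Qed.

Lemma vnorm_ge0 {N : nat} (x : vec N) : 0 <= vnorm x.
Proof. exact: sqrt_pos. Qed.

Lemma vnorm_le_compat {N : nat} (x y : vec N) :
  (forall i, Rabs (x i) <= Rabs (y i)) -> vnorm x <= vnorm y.
Proof. by move=> Hxy; rewrite !vnormE; apply/sqrt_le_1_alt/sqsum_le_compat. Qed.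

Lemma vnorm_scal {N : nat} (r : R) (x : vec N) :
  vnorm (fun i => r * x i) = Rabs r * vnorm x.
Proof.
  rewrite !vnormE sqsum_scal sqrt_mult_alt; last exact: pow2_ge_0.
  by rewrite -pow2_abs sqrt_pow2 //; apply: Rabs_pos.
Qed.

(* A crude triangle inequality suffices: every constant it introduces is absorbed by shrinking
   the radius of the weak minimality. *)
Lemma vnorm_add_le {N : nat} (x y z : vec N) :
  (forall i, z i = x i + y i) -> vnorm z <= 2 * (vnorm x + vnorm y).
Proof.
  move=> /functional_extensionality ->; rewrite !vnormE.
  have := sqsum_add_le (enum 'I_N) x y.
  have := sqsum_ge0 (enum 'I_N) x; have := sqsum_ge0 (enum 'I_N) y.
  set X := sqsum _ x; set Y := sqsum _ y => HY HX Hsum.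
  have := sqrt_pos X; have := sqrt_pos Y.
  have := sqrt_sqrt X HX; have := sqrt_sqrt Y HY => EY EX PY PX.
  rewrite -(sqrt_pow2 (2 * (sqrt X + sqrt Y))); last lra.
  apply: sqrt_le_1_alt; nra.
Qed.

Lemma vnorm_lincomb_le {N : nat} (r1 r2 : R) (x y z : vec N) :
  (forall i, z i = r1 * x i + r2 * y i) ->
  vnorm z <= 2 * (Rabs r1 * vnorm x + Rabs r2 * vnorm y).
Proof. by move=> /vnorm_add_le; rewrite !vnorm_scal. Qed.

Lemma Rabs_le_vnorm {N : nat} (x : vec N) (i : 'I_N) : Rabs (x i) <= vnorm x.
Proof.
  rewrite vnormE -sqrt_Rsqr_abs; apply: sqrt_le_1_alt.
  have -> : Rsqr (x i) = x i ^ 2 by rewrite /Rsqr; ring.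
  by apply: sq_le_sqsum; rewrite mem_enum.
Qed.

Lemma vec_cont_on_bounded {N : nat} (a b : R) (g : R -> vec N) :
  a <= b -> (forall i, cont_on a b (fun t => g t i)) ->
  exists M, forall x, in_ab a b x -> vnorm (g x) <= M.
Proof.
  move=> Hab Hg.
  have [M HM] := functional_choice _ (fun i => cont_on_bounded a b _ Hab (Hg i)).
  exists (vnorm M) => x Hx; apply: vnorm_le_compat => i.
  exact: Rle_trans (HM i x Hx) (Rle_abs _).
Qed.

Lemma supnorm_le {N : nat} (a b : R) (g : R -> vec N) (B : R) :
  a <= b -> (forall x, in_ab a b x -> vnorm (g x) <= B) -> supnorm a b g <= B.
Proof.
  move=> Hab HB; rewrite /supnorm.
  have [_ Hlub] := Lub_Rbar_correct (fun r => exists x, in_ab a b x /\ r = vnorm (g x)).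
  have Hle : Rbar_le (Lub_Rbar (fun r => exists x, in_ab a b x /\ r = vnorm (g x))) B.
  { by apply: Hlub => _ [x [Hx ->]]; apply: HB. }
  have Ha : in_ab a b a by rewrite /in_ab; lra.
  have := HB a Ha; have := vnorm_ge0 (g a).
  by case: (Lub_Rbar _) Hle => [r||] /=; lra.
Qed.

Lemma vnorm_le_supnorm {N : nat} (a b : R) (g : R -> vec N) (x : R) :
  a <= b -> (forall i, cont_on a b (fun t => g t i)) -> in_ab a b x ->
  vnorm (g x) <= supnorm a b g.
Proof.
  move=> Hab Hg Hx; have [M HM] := vec_cont_on_bounded a b g Hab Hg; rewrite /supnorm.
  have [Hub Hlub] := Lub_Rbar_correct (fun r => exists x, in_ab a b x /\ r = vnorm (g x)).
  have Hle : Rbar_le (Lub_Rbar (fun r => exists x, in_ab a b x /\ r = vnorm (g x))) M.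
  { by apply: Hlub => _ [y [Hy ->]]; apply: HM. }
  have := Hub _ (ex_intro _ x (conj Hx (Logic.eq_refl _))).
  by case: (Lub_Rbar _) Hle.
Qed.

(** * Continuity of the Lagrangian along C^1 curves *)

Lemma ex_pos_forall_ord {N : nat} (P : 'I_N -> R -> Prop) :
  (forall i d d', 0 < d' <= d -> P i d -> P i d') ->
  (forall i, exists d, 0 < d /\ P i d) -> exists d, 0 < d /\ forall i, P i d.
Proof.
  move=> Hmono HP.
  suff [d [Hd Hl]] : exists d, 0 < d /\ forall i, i \in enum 'I_N -> P i d.
  { by exists d; split=> // i; apply: Hl; rewrite mem_enum. }
  elim: (enum 'I_N) => [|j l [d1 [Hd1 Hl]]].
  { by exists 1; split=> [|i]; [lra | rewrite in_nil]. }
  have [d2 [Hd2 Hj]] := HP j.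
  have Hd : 0 < Rmin d1 d2 by apply: Rmin_pos.
  exists (Rmin d1 d2); split=> // i; rewrite in_cons => /orP [/eqP ->|Hi].
  - by apply: (Hmono j d2) Hj; split=> //; apply: Rmin_r.
  - by apply: (Hmono i d1) (Hl i Hi); split=> //; apply: Rmin_l.
Qed.

Lemma is_C1_near {N : nat} (a b : R) (w w' : R -> vec N) (x0 e : R) :
  is_C1 a b w w' -> in_ab a b x0 -> 0 < e ->
  exists d, 0 < d /\ forall i y, in_ab a b y -> Rabs (y - x0) < d ->
    Rabs (w y i - w x0 i) < e /\ Rabs (w' y i - w' x0 i) < e.
Proof.
  move=> Hw Hx0 He.
  apply: (ex_pos_forall_ord (fun i d => forall y, in_ab a b y -> Rabs (y - x0) < d ->
    Rabs (w y i - w x0 i) < e /\ Rabs (w' y i - w' x0 i) < e)).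
  { by move=> i d d' Hd' H y Hy Hyd; apply: H => //; lra. }
  move=> i; have [/cont_on_eps H1 /cont_on_eps H2] := is_C1_cont_on a b w w' i Hw.
  have [d1 [Hd1 K1]] := H1 x0 Hx0 e He; have [d2 [Hd2 K2]] := H2 x0 Hx0 e He.
  exists (Rmin d1 d2); split; first exact: Rmin_pos.
  move=> y Hy Hyd; split.
  - by apply: K1 => //; apply: Rlt_le_trans Hyd (Rmin_l _ _).
  - by apply: K2 => //; apply: Rlt_le_trans Hyd (Rmin_r _ _).
Qed.

Lemma cont_on_lagr {N : nat} (a b : R) (f : R -> vec N -> vec N -> R) (w w' : R -> vec N) :
  cont_dom a b f -> is_C1 a b w w' -> cont_on a b (fun x => f x (w x) (w' x)).
Proof.
  move=> Hf Hw; apply/cont_on_eps => x Hx eps Heps.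
  have [d0 [Hd0 K]] := Hf x (w x) (w' x) Hx eps Heps.
  have [d [Hd Kd]] := is_C1_near a b w w' x d0 Hw Hx Hd0.
  exists (Rmin d d0); split; first exact: Rmin_pos.
  move=> y Hy Hyd; have Hyd' := Rlt_le_trans _ _ _ Hyd (Rmin_l _ _).
  apply: K => //; first exact: Rlt_le_trans Hyd (Rmin_r _ _).
  - by move=> i; case: (Kd i y Hy Hyd').
  - by move=> i; case: (Kd i y Hy Hyd').
Qed.

Lemma cont_dom_continuity_pt_segment {N : nat} (a b : R) (f : R -> vec N -> vec N -> R)
    (x0 : R) (y0 p0 c : vec N) (t : R) :
  cont_dom a b f -> in_ab a b x0 ->
  continuity_pt (fun s => f x0 y0 (fun i => p0 i - s * c i)) t.
Proof.
  move=> Hf Hx0 eps Heps.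
  have [d [Hd K]] := Hf x0 y0 (fun i => p0 i - t * c i) Hx0 eps Heps.
  have HC : 0 < vnorm c + 1 by have := vnorm_ge0 c; lra.
  exists (d / (vnorm c + 1)); split; first exact: Rdiv_lt_0_compat.
  move=> s [_ /= Hs]; apply: K => // [|i|i]; try by rewrite Rminus_eq_0 Rabs_R0.
  have -> : p0 i - s * c i - (p0 i - t * c i) = (t - s) * c i by ring.
  rewrite Rabs_mult Rabs_minus_sym; have := Rabs_le_vnorm c i.
  have := Rabs_pos (s - t); have := Rabs_pos (c i).
  move: Hs; rewrite /R_dist => /(Rlt_div_r _ _ _ HC) Hs; nra.
Qed.

Lemma cont_dom_bounded_near_segment {N : nat} (a b : R) (f : R -> vec N -> vec N -> R)
    (x0 : R) (y0 p0 c : vec N) :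
  cont_dom a b f -> in_ab a b x0 ->
  exists d, 0 < d /\ exists B, forall s x y p, -1 <= s <= 1 ->
    in_ab a b x -> Rabs (x - x0) < d -> (forall i, Rabs (y i - y0 i) < d) ->
    (forall i, Rabs (p i - (p0 i - s * c i)) < d) -> Rabs (f x y p) <= B.
Proof.
  move=> Hf Hx0; set pt := fun t i => p0 i - t * c i.
  set C := vnorm c + 1; have HC : 0 < C by have := vnorm_ge0 c; rewrite /C; lra.
  have [r Hr] := functional_choice _ (fun t => Hf x0 y0 (pt t) Hx0 1 Rlt_0_1).
  (* Lebesgue number of the cover of [-1,1] by the intervals of radius r t / (2 C) *)
  have Hrad : forall t, 0 < r t / (2 * C).
  { by move=> t; apply: Rdiv_lt_0_compat; [case: (Hr t) | lra]. }
  have [d Hd] := compactness_value_1d (-1) 1 (fun t => mkposreal _ (Hrad t)); rewrite /= in Hd.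
  have Hcont : forall t, -1 <= t <= 1 -> continuity_pt (fun t => Rabs (f x0 y0 (pt t))) t.
  { move=> t _; apply: (continuity_pt_comp (fun t => f x0 y0 (pt t)) Rabs).
    - exact: (cont_dom_continuity_pt_segment a b f x0 y0 p0 c t Hf Hx0).
    - exact: Rcontinuity_abs. }
  have [tM [HM _]] := continuity_ab_maj _ (-1) 1 ltac:(lra) Hcont.
  exists d; split; first exact: cond_pos.
  exists (1 + Rabs (f x0 y0 (pt tM))) => s x y p Hs Hx Hxd Hy Hp.
  apply: Rnot_lt_le => Hlt; apply: (Hd s Hs) => -[t [Ht [Hst Hdt]]].
  have [Hrt Kt] := Hr t; have HMt := HM t Ht; rewrite /= in HMt.
  have HC1 : 1 <= C by have := vnorm_ge0 c; rewrite /C; lra.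
  have E : r t / (2 * C) * (2 * C) = r t by field; lra.
  have Hdr : d < r t by have := cond_pos d; nra.
  have : Rabs (f x y p - f x0 y0 (pt t)) < 1.
  { apply: Kt => // [|i|i]; first lra; first by have := Hy i; lra.
    have -> : p i - pt t i = (p i - (p0 i - s * c i)) + (t - s) * c i by rewrite /pt; ring.
    apply: Rle_lt_trans (Rabs_triang _ _) _; rewrite Rabs_mult (Rabs_minus_sym t).
    have Hci : Rabs (c i) <= C - 1 by have := Rabs_le_vnorm c i; rewrite /C; lra.
    have := Hp i; have := Rabs_pos (s - t); have := Rabs_pos (c i); have := cond_pos d; nra. }
  have := Rabs_triang_inv (f x y p) (f x0 y0 (pt t)); lra.
Qed.

Lemma lagr_perturb_bounded_near {N : nat} (a b : R) (f : R -> vec N -> vec N -> R)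
    (v v' : R -> vec N) (e : R) (c : vec N) :
  cont_dom a b f -> is_C1 a b v v' -> in_ab a b e ->
  exists d, 0 < d /\ exists B, forall x al s, in_ab a b x -> Rabs (x - e) < d ->
    Rabs al < d -> -1 <= s <= 1 ->
    Rabs (f x (fun i => v x i + al * c i) (fun i => v' x i - s * c i) - f x (v x) (v' x)) <= B.
Proof.
  move=> Hf Hv He.
  have [d1 [Hd1 [B HB]]] := cont_dom_bounded_near_segment a b f e (v e) (v' e) c Hf He.
  have [d2 [Hd2 Kd2]] := is_C1_near a b v v' e (d1 / 2) Hv He ltac:(lra).
  have HC : 0 < vnorm c + 1 by have := vnorm_ge0 c; lra.
  set d := Rmin (d1 / 2 / (vnorm c + 1)) d2.
  have Hd : 0 < d by apply: Rmin_pos => //; apply: Rdiv_lt_0_compat; lra.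
  have Hdd1 : d * (vnorm c + 1) <= d1 / 2.
  { by apply/(Rle_div_r _ _ _ HC)/Rmin_l. }
  have Hdd1' : d <= d1 / 2 by have := vnorm_ge0 c; nra.
  have Hbound : forall x al s, in_ab a b x -> Rabs (x - e) < d -> Rabs al < d ->
      -1 <= s <= 1 -> Rabs (f x (fun i => v x i + al * c i) (fun i => v' x i - s * c i)) <= B.
  { move=> x al s Hx Hxd Hal Hs.
    have Hxd2 := Rlt_le_trans _ _ _ Hxd (Rmin_r _ _).
    apply: (HB s) => //; first lra.
    - move=> i; have [K _] := Kd2 i x Hx Hxd2.
      have -> : v x i + al * c i - v e i = (v x i - v e i) + al * c i by ring.
      apply: Rle_lt_trans (Rabs_triang _ _) _; rewrite Rabs_mult.
      have := Rabs_le_vnorm c i; have := Rabs_pos al; have := Rabs_pos (c i); nra.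
    - move=> i; have [_ K] := Kd2 i x Hx Hxd2.
      have -> : v' x i - s * c i - (v' e i - s * c i) = v' x i - v' e i by ring.
      lra. }
  exists d; split=> //; exists (2 * B) => x al s Hx Hxd Hal Hs.
  have H0 : Rabs (f x (v x) (v' x)) <= B.
  { have -> : v x = (fun i => v x i + 0 * c i) by apply: functional_extensionality => i; ring.
    have -> : v' x = (fun i => v' x i - 0 * c i) by apply: functional_extensionality => i; ring.
    by apply: Hbound => //; rewrite ?Rabs_R0; lra. }
  have HF := Hbound x al s Hx Hxd Hal Hs.
  by apply: Rle_trans (Rabs_triang _ _) _; rewrite Rabs_Ropp; lra.
Qed.

(** * A boundary-layer correction *)

Lemma is_derive_Rmax0_sq (u : R) : is_derive (fun u => Rmax 0 u ^ 2) u (2 * Rmax 0 u).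
Proof.
  apply/is_derive_Reals => eps Heps; exists (mkposreal eps Heps) => h Hh /= Hhe.
  have Htaylor : Rabs (Rmax 0 (u + h) ^ 2 - Rmax 0 u ^ 2 - 2 * Rmax 0 u * h) <= h ^ 2.
  { rewrite /Rmax; repeat case: Rle_dec; rewrite /Rabs; case: Rcase_abs; nra. }
  have Hh0 : 0 < Rabs h by apply: Rabs_pos_lt.
  have -> : (Rmax 0 (u + h) ^ 2 - Rmax 0 u ^ 2) / h - 2 * Rmax 0 u =
            (Rmax 0 (u + h) ^ 2 - Rmax 0 u ^ 2 - 2 * Rmax 0 u * h) / h by field.
  rewrite Rabs_div // -(pow2_abs h) in Htaylor *.
  apply/(Rlt_div_l _ _ _ Hh0); nra.
Qed.

Lemma continuous_Rmax0 (u : R) : continuous (Rmax 0) u.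
Proof.
  apply/filterlim_locally => eps; exists eps => v Hv.
  apply: Rle_lt_trans Hv; rewrite /ball /= /AbsRing_ball /abs /minus /plus /opp /=.
  by rewrite /Rmax /Rabs; repeat case: Rle_dec; repeat case: Rcase_abs; lra.
Qed.

Definition bump (t : R) : R := t * Rmax 0 (1 - t) ^ 2.
Definition bump' (t : R) : R := Rmax 0 (1 - t) * (Rmax 0 (1 - t) - 2 * t).

Lemma is_derive_bump (t : R) : is_derive bump t (bump' t).
Proof.
  have Hlin : is_derive (fun t => 1 - t) t (-1) by auto_derive.
  have Hsq := is_derive_comp _ _ t _ _ (is_derive_Rmax0_sq (1 - t)) Hlin.
  have := is_derive_mult (fun t => t) _ t _ _ (is_derive_id t) Hsq Rmult_comm.
  rewrite /bump'; congr is_derive.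
  by rewrite /plus /mult /scal /one /= /mult /=; ring.
Qed.

Lemma continuous_bump' (t : R) : continuous bump' t.
Proof.
  have Hm : continuous (fun t => Rmax 0 (1 - t)) t.
  { apply: continuous_comp; last exact: continuous_Rmax0.
    by apply: (continuous_minus (fun _ => 1)); [apply: continuous_const | apply: continuous_id]. }
  apply: (continuous_mult (fun t => Rmax 0 (1 - t))) => //.
  apply: continuous_minus => //.
  apply: (continuous_mult (fun _ => 2) (fun t => t));
    [apply: continuous_const | apply: continuous_id].
Qed.

Lemma bump_0 : bump 0 = 0 /\ bump' 0 = 1.
Proof. by rewrite /bump /bump' Rmax_right; [split; ring | lra]. Qed.

Lemma bump_ge1 (t : R) : 1 <= t -> bump t = 0 /\ bump' t = 0.
Proof. by move=> Ht; rewrite /bump /bump' Rmax_left; [split; ring | lra]. Qed.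

Lemma bump_bound (t : R) : 0 <= t -> Rabs (bump t) <= 1 /\ Rabs (bump' t) <= 1.
Proof.
  move=> Ht; rewrite /bump /bump'; have [Hm|Hm] := Rle_lt_dec 0 (1 - t).
  - rewrite (Rmax_right 0 (1 - t) Hm).
    have Hsq : 0 <= (1 - t) ^ 2 <= 1 by split; nra.
    have : t * (1 - t) ^ 2 <= 1 * 1 by apply: Rmult_le_compat; lra.
    by split; apply: Rabs_le; split; nra.
  - rewrite Rmax_left; last lra.
    by rewrite /= !Rmult_0_l Rmult_0_r Rabs_R0; split; lra.
Qed.

Lemma le1_div (x y : R) : 0 < y -> y <= x -> 1 <= x / y.
Proof.
  by move=> Hy Hyx; apply: (Rmult_le_reg_r y) => //; rewrite /Rdiv Rmult_assoc Rinv_l; lra.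
Qed.

Definition end_corr {N : nat} (a b d : R) (ca cb : vec N) (x : R) : vec N :=
  fun i => d * (cb i * bump ((b - x) / d) - ca i * bump ((x - a) / d)).

Definition end_corr' {N : nat} (a b d : R) (ca cb : vec N) (x : R) : vec N :=
  fun i => - (ca i * bump' ((x - a) / d) + cb i * bump' ((b - x) / d)).

Section EndCorrection.
Variables (N : nat) (a b d : R) (ca cb : vec N).
Hypothesis d_gt0 : 0 < d.

Lemma is_derive_end_corr (i : 'I_N) (x : R) :
  is_derive (fun t => end_corr a b d ca cb t i) x (end_corr' a b d ca cb x i).
Proof.
  have La : is_derive (fun t => (t - a) / d) x (/ d) by auto_derive; [|field]; lra.
  have Lb : is_derive (fun t => (b - t) / d) x (- / d) by auto_derive; [|field]; lra.
  have Ha := is_derive_comp bump _ x _ _ (is_derive_bump _) La.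
  have Hb := is_derive_comp bump _ x _ _ (is_derive_bump _) Lb.
  have := is_derive_scal _ _ d _ (is_derive_minus _ _ _ _ _
    (is_derive_scal _ _ (cb i) _ Hb) (is_derive_scal _ _ (ca i) _ Ha)).
  rewrite /end_corr'; congr is_derive.
  by rewrite /minus /plus /opp /scal /= /mult /=; field; lra.
Qed.

Lemma continuous_end_corr' (i : 'I_N) (x : R) :
  continuous (fun t => end_corr' a b d ca cb t i) x.
Proof.
  have Hc : forall (c : R) (g : R -> R), ex_derive g x ->
      continuous (fun t => c * bump' (g t)) x.
  { move=> c g Hg; apply: (continuous_mult (fun _ => c)); first exact: continuous_const.
    by apply: continuous_comp; [exact: ex_derive_continuous | exact: continuous_bump']. }
  apply: continuous_opp; apply: continuous_plus; apply: Hc; auto_derive; lra.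
Qed.

Lemma end_corr_at_a (i : 'I_N) :
  d <= b - a -> end_corr a b d ca cb a i = 0 /\ end_corr' a b d ca cb a i = - ca i.
Proof.
  move=> Hd; have [Z Z'] := bump_ge1 ((b - a) / d) (le1_div _ _ d_gt0 Hd).
  have [B0 B0'] := bump_0; rewrite /end_corr /end_corr' Rminus_eq_0 Rdiv_0_l.
  by rewrite Z Z' B0 B0'; split; ring.
Qed.

Lemma end_corr_at_b (i : 'I_N) :
  d <= b - a -> end_corr a b d ca cb b i = 0 /\ end_corr' a b d ca cb b i = - cb i.
Proof.
  move=> Hd; have [Z Z'] := bump_ge1 ((b - a) / d) (le1_div _ _ d_gt0 Hd).
  have [B0 B0'] := bump_0; rewrite /end_corr /end_corr' Rminus_eq_0 Rdiv_0_l.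
  by rewrite Z Z' B0 B0'; split; ring.
Qed.

Lemma add_end_corr_near_a (u u' : R -> vec N) (x : R) : x <= b - d ->
  add_fun u (end_corr a b d ca cb) x = (fun i => u x i + - (d * bump ((x - a) / d)) * ca i) /\
  add_fun u' (end_corr' a b d ca cb) x = (fun i => u' x i - bump' ((x - a) / d) * ca i).
Proof.
  move=> Hx; have [Z Z'] := bump_ge1 ((b - x) / d) (le1_div (b - x) d d_gt0 ltac:(lra)).
  rewrite /add_fun /end_corr /end_corr' Z Z'.
  by split; apply: functional_extensionality => i; ring.
Qed.

Lemma add_end_corr_near_b (u u' : R -> vec N) (x : R) : a + d <= x ->
  add_fun u (end_corr a b d ca cb) x = (fun i => u x i + d * bump ((b - x) / d) * cb i) /\
  add_fun u' (end_corr' a b d ca cb) x = (fun i => u' x i - bump' ((b - x) / d) * cb i).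
Proof.
  move=> Hx; have [Z Z'] := bump_ge1 ((x - a) / d) (le1_div (x - a) d d_gt0 ltac:(lra)).
  rewrite /add_fun /end_corr /end_corr' Z Z'.
  by split; apply: functional_extensionality => i; ring.
Qed.

Lemma add_end_corr_mid (u u' : R -> vec N) (x : R) : a + d <= x <= b - d ->
  add_fun u (end_corr a b d ca cb) x = u x /\ add_fun u' (end_corr' a b d ca cb) x = u' x.
Proof.
  move=> Hx; have [-> ->] := add_end_corr_near_a u u' x ltac:(lra).
  have [Z Z'] := bump_ge1 ((x - a) / d) (le1_div (x - a) d d_gt0 ltac:(lra)).
  by rewrite Z Z'; split; apply: functional_extensionality => i; ring.
Qed.

Lemma vnorm_end_corr_le (x : R) : in_ab a b x ->
  vnorm (end_corr a b d ca cb x) <= 2 * d * (vnorm ca + vnorm cb) /\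
  vnorm (end_corr' a b d ca cb x) <= 2 * (vnorm ca + vnorm cb).
Proof.
  move=> [Hxa Hxb].
  have [Ba Ba'] := bump_bound ((x - a) / d) (Rdiv_le_0_compat (x - a) d ltac:(lra) d_gt0).
  have [Bb Bb'] := bump_bound ((b - x) / d) (Rdiv_le_0_compat (b - x) d ltac:(lra) d_gt0).
  have := vnorm_ge0 ca; have := vnorm_ge0 cb => Hcb Hca; split.
  - apply: Rle_trans (vnorm_lincomb_le (- (d * bump ((x - a) / d))) (d * bump ((b - x) / d))
      ca cb _ _) _; first by move=> i; rewrite /end_corr; ring.
    rewrite Rabs_Ropp (Rabs_mult d (bump _)) (Rabs_mult d (bump ((b - x) / d))).
    rewrite (Rabs_pos_eq d); last lra.
    have : d * Rabs (bump ((x - a) / d)) * vnorm ca <= d * vnorm ca.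
    { by apply: Rmult_le_compat_r => //; nra. }
    have : d * Rabs (bump ((b - x) / d)) * vnorm cb <= d * vnorm cb.
    { by apply: Rmult_le_compat_r => //; nra. }
    lra.
  - apply: Rle_trans (vnorm_lincomb_le (- bump' ((x - a) / d)) (- bump' ((b - x) / d))
      ca cb _ _) _; first by move=> i; rewrite /end_corr'; ring.
    rewrite !Rabs_Ropp; nra.
Qed.
End EndCorrection.

(** * Correcting the Neumann slopes *)

Definition neumann_part {N : nat} (ID : 'I_N -> bool) (p : vec N) : vec N :=
  fun i => if ID i then 0 else p i.

Lemma vnorm_neumann_part_le {N : nat} (ID : 'I_N -> bool) (p p0 : vec N) :
  (forall i, ~~ ID i -> p0 i = 0) -> vnorm (neumann_part ID p) <= vnorm (fun i => p i - p0 i).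
Proof.
  move=> Hp0; apply: vnorm_le_compat => i; rewrite /neumann_part.
  case Hi: (ID i); first by rewrite Rabs_R0; apply: Rabs_pos.
  by rewrite Hp0 ?Hi // Rminus_0_r; apply: Rle_refl.
Qed.

Lemma in_MN_end_corr {N : nat} (a b d : R) (IDa IDb : 'I_N -> bool) (u0 v v' : R -> vec N) :
  0 < d <= b - a -> in_M a b IDa IDb u0 v v' ->
  in_MN a b IDa IDb u0
    (add_fun v (end_corr a b d (neumann_part IDa (v' a)) (neumann_part IDb (v' b))))
    (add_fun v' (end_corr' a b d (neumann_part IDa (v' a)) (neumann_part IDb (v' b)))).
Proof.
  move=> [Hd Hdab] [Hv HD]; set ca := neumann_part IDa (v' a); set cb := neumann_part IDb (v' b).
  split; first split.
  - apply: is_C1_add_smooth => // i x.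
    + exact: is_derive_end_corr.
    + exact: continuous_end_corr'.
  - move=> i; have [HDa HDb] := HD i; rewrite /add_fun.
    have [-> _] := end_corr_at_a N a b d ca cb Hd i Hdab.
    have [-> _] := end_corr_at_b N a b d ca cb Hd i Hdab.
    by rewrite !Rplus_0_r.
  - move=> i; rewrite /add_fun.
    have [_ ->] := end_corr_at_a N a b d ca cb Hd i Hdab.
    have [_ ->] := end_corr_at_b N a b d ca cb Hd i Hdab.
    by rewrite /ca /cb /neumann_part; split=> /negbTE ->; ring.
Qed.

Lemma C1dist_end_corr_le {N : nat} (a b d : R) (IDa IDb : 'I_N -> bool)
    (u0 u0' v v' : R -> vec N) :
  a <= b -> 0 < d <= 1 -> is_C1 a b v v' -> is_C1 a b u0 u0' ->
  (forall i, (~~ IDa i -> u0' a i = 0) /\ (~~ IDb i -> u0' b i = 0)) ->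
  C1dist a b
    (add_fun v (end_corr a b d (neumann_part IDa (v' a)) (neumann_part IDb (v' b))))
    (add_fun v' (end_corr' a b d (neumann_part IDa (v' a)) (neumann_part IDb (v' b))))
    u0 u0' <= 18 * C1dist a b v v' u0 u0'.
Proof.
  move=> Hab [Hd Hd1] Hv Hu0 Hu0N.
  set ca := neumann_part IDa (v' a); set cb := neumann_part IDb (v' b).
  set S0 := supnorm a b (fun x i => v x i - u0 x i).
  set S1 := supnorm a b (fun x i => v' x i - u0' x i).
  have Ha : in_ab a b a by rewrite /in_ab; lra.
  have Hb : in_ab a b b by rewrite /in_ab; lra.
  have Hdiff : forall i, cont_on a b (fun t => v t i - u0 t i) /\
                         cont_on a b (fun t => v' t i - u0' t i).
  { move=> i; have [Hvi Hvi'] := is_C1_cont_on a b v v' i Hv.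
    have [Hui Hui'] := is_C1_cont_on a b u0 u0' i Hu0.
    by split; apply: cont_on_minus. }
  have B0 : forall x, in_ab a b x -> vnorm (fun i => v x i - u0 x i) <= S0.
  { by move=> x; apply: vnorm_le_supnorm => // i; case: (Hdiff i). }
  have B1 : forall x, in_ab a b x -> vnorm (fun i => v' x i - u0' x i) <= S1.
  { by move=> x; apply: vnorm_le_supnorm => // i; case: (Hdiff i). }
  have Hca : vnorm ca <= S1.
  { apply: Rle_trans (B1 a Ha); apply: vnorm_neumann_part_le => i; exact: (proj1 (Hu0N i)). }
  have Hcb : vnorm cb <= S1.
  { apply: Rle_trans (B1 b Hb); apply: vnorm_neumann_part_le => i; exact: (proj2 (Hu0N i)). }
  have HS0 : 0 <= S0 := Rle_trans _ _ _ (vnorm_ge0 _) (B0 a Ha).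
  have HS1 : 0 <= S1 := Rle_trans _ _ _ (vnorm_ge0 _) (B1 a Ha).
  rewrite /C1dist -/S0 -/S1.
  have : supnorm a b (fun x i => add_fun v (end_corr a b d ca cb) x i - u0 x i) <= 2 * S0 + 8 * S1.
  { apply: supnorm_le => // x Hx; have [E _] := vnorm_end_corr_le N a b d ca cb Hd x Hx.
    apply: Rle_trans (vnorm_add_le (fun i => v x i - u0 x i) (end_corr a b d ca cb x) _ _) _.
    - by move=> i; rewrite /add_fun; ring.
    - have := B0 x Hx; nra. }
  have : supnorm a b (fun x i => add_fun v' (end_corr' a b d ca cb) x i - u0' x i) <= 10 * S1.
  { apply: supnorm_le => // x Hx; have [_ E] := vnorm_end_corr_le N a b d ca cb Hd x Hx.
    apply: Rle_trans (vnorm_add_le (fun i => v' x i - u0' x i) (end_corr' a b d ca cb x) _ _) _.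
    - by move=> i; rewrite /add_fun; ring.
    - have := B1 x Hx; lra. }
  lra.
Qed.

Lemma lagr_end_corr_bounded {N : nat} (a b : R) (f : R -> vec N -> vec N -> R)
    (v v' : R -> vec N) (ca cb : vec N) :
  a < b -> cont_dom a b f -> is_C1 a b v v' ->
  exists d0, 0 < d0 /\ exists M, forall d, 0 < d < d0 -> 2 * d <= b - a ->
    forall x, in_ab a b x ->
    Rabs (f x (add_fun v (end_corr a b d ca cb) x) (add_fun v' (end_corr' a b d ca cb) x) -
          f x (v x) (v' x)) <= M.
Proof.
  move=> Hab Hf Hv.
  have Ha : in_ab a b a by rewrite /in_ab; lra.
  have Hb : in_ab a b b by rewrite /in_ab; lra.
  have [da [Hda [Ba HBa]]] := lagr_perturb_bounded_near a b f v v' a ca Hf Hv Ha.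
  have [db [Hdb [Bb HBb]]] := lagr_perturb_bounded_near a b f v v' b cb Hf Hv Hb.
  exists (Rmin da db); split; first exact: Rmin_pos.
  exists (Rabs Ba + Rabs Bb) => d [Hd Hdd] Hdab x [Hxa Hxb].
  have Hdda := Rlt_le_trans _ _ _ Hdd (Rmin_l _ _).
  have Hddb := Rlt_le_trans _ _ _ Hdd (Rmin_r _ _).
  have [HBa0 HBb0] := (Rabs_pos Ba, Rabs_pos Bb).
  have Hbump : forall t, 0 <= t -> Rabs (d * bump t) <= d /\ -1 <= bump' t <= 1.
  { move=> t Ht; have [Bt Bt'] := bump_bound t Ht; rewrite Rabs_mult (Rabs_pos_eq d); last lra.
    by split; [nra | apply/Rabs_le_between]. }
  have [Hxd|Hxd] := Rle_lt_dec x (a + d).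
  - have [Hal Hs] := Hbump ((x - a) / d) (Rdiv_le_0_compat (x - a) d ltac:(lra) Hd).
    have [-> ->] := add_end_corr_near_a N a b d ca cb Hd v v' x ltac:(lra).
    apply: Rle_trans (HBa x _ _ (conj Hxa Hxb) _ _ Hs) _; last by have := Rle_abs Ba; lra.
    + by rewrite Rabs_pos_eq; lra.
    + by rewrite Rabs_Ropp; lra.
  have [Hxd'|Hxd'] := Rle_lt_dec (b - d) x.
  - have [Hal Hs] := Hbump ((b - x) / d) (Rdiv_le_0_compat (b - x) d ltac:(lra) Hd).
    have [-> ->] := add_end_corr_near_b N a b d ca cb Hd v v' x ltac:(lra).
    apply: Rle_trans (HBb x _ _ (conj Hxa Hxb) _ _ Hs) _; last by have := Rle_abs Bb; lra.
    + by rewrite Rabs_minus_sym Rabs_pos_eq; lra.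
    + lra.
  - have [-> ->] := add_end_corr_mid N a b d ca cb Hd v v' x ltac:(lra).
    by rewrite Rminus_eq_0 Rabs_R0; lra.
Qed.

Lemma Phi_end_corr_le {N : nat} (a b : R) (f : R -> vec N -> vec N -> R)
    (v v' : R -> vec N) (ca cb : vec N) :
  a < b -> cont_dom a b f -> is_C1 a b v v' ->
  exists d0, 0 < d0 /\ exists K, forall d, 0 < d < d0 -> 2 * d <= b - a ->
    Phi f a b (add_fun v (end_corr a b d ca cb)) (add_fun v' (end_corr' a b d ca cb)) <=
    Phi f a b v v' + K * d.
Proof.
  move=> Hab Hf Hv.
  have [d0 [Hd0 [M HM]]] := lagr_end_corr_bounded a b f v v' ca cb Hab Hf Hv.
  exists d0; split=> //; exists (2 * M) => d [Hd Hdd] Hdab.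
  set vd := add_fun v (end_corr a b d ca cb); set vd' := add_fun v' (end_corr' a b d ca cb).
  have Hvd : is_C1 a b vd vd'.
  { apply: is_C1_add_smooth => // i x.
    - exact: is_derive_end_corr.
    - exact: continuous_end_corr'. }
  have Ivd := cont_on_ex_RInt a b _ ltac:(lra) (cont_on_lagr a b f vd vd' Hf Hvd).
  have Iv := cont_on_ex_RInt a b _ ltac:(lra) (cont_on_lagr a b f v v' Hf Hv).
  have HG : RInt (fun x => f x (vd x) (vd' x) - f x (v x) (v' x)) a b <= 2 * d * M.
  { apply: RInt_le_boundary_layers; try lra.
    - exact: (ex_RInt_minus _ _ a b Ivd Iv).
    - by move=> x Hx; apply: HM => //; rewrite /in_ab; lra.
    - by move=> x Hx; apply: HM => //; rewrite /in_ab; lra.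
    - move=> x Hx; rewrite /vd /vd'.
      by have [-> ->] := add_end_corr_mid N a b d ca cb Hd v v' x ltac:(lra); apply: Rminus_eq_0. }
  rewrite (RInt_minus _ _ a b Ivd Iv) /minus /plus /opp /= in HG.
  rewrite /Phi; lra.
Qed.

Lemma Phi_end_corr_lt {N : nat} (a b : R) (f : R -> vec N -> vec N -> R)
    (v v' : R -> vec N) (ca cb : vec N) (eta : R) :
  a < b -> cont_dom a b f -> is_C1 a b v v' -> 0 < eta ->
  exists d, 0 < d <= 1 /\ d <= b - a /\
    Phi f a b (add_fun v (end_corr a b d ca cb)) (add_fun v' (end_corr' a b d ca cb)) <
    Phi f a b v v' + eta.
Proof.
  move=> Hab Hf Hv Heta.
  have [d0 [Hd0 [K HK]]] := Phi_end_corr_le a b f v v' ca cb Hab Hf Hv.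
  have HK1 : 0 < Rabs K + 1 by have := Rabs_pos K; lra.
  set d := Rmin (Rmin (d0 / 2) ((b - a) / 2)) (Rmin 1 (eta / (2 * (Rabs K + 1)))).
  have Hd : 0 < d.
  { by repeat apply: Rmin_pos; try apply: Rdiv_lt_0_compat; lra. }
  have Hd0' : d <= d0 / 2 by apply: Rle_trans (Rmin_l _ _) (Rmin_l _ _).
  have Hdab : d <= (b - a) / 2 by apply: Rle_trans (Rmin_l _ _) (Rmin_r _ _).
  have Hd1 : d <= 1 by apply: Rle_trans (Rmin_r _ _) (Rmin_l _ _).
  have Hdeta : d * (2 * (Rabs K + 1)) <= eta.
  { have HK2 : 0 < 2 * (Rabs K + 1) by lra.
    by apply/(Rle_div_r _ _ _ HK2); apply: Rle_trans (Rmin_r _ _) (Rmin_r _ _). }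
  exists d; split; [lra | split; first lra].
  have := HK d ltac:(lra) ltac:(lra); have := Rle_abs K; nra.
Qed.

Theorem proposition7p2 (N : nat) (a b : R) (hab : a < b)
  (f : R -> vec N -> vec N -> R) (hf : is_C1_lagr a b f)
  (u0 u0' : R -> vec N) (hu0 : is_C1 a b u0 u0')
  (IDa IDb : 'I_N -> bool) :
  (weak_min f a b (in_MN a b IDa IDb u0) u0 u0' ->
     weak_min f a b (in_M a b IDa IDb u0) u0 u0') /\
  (weak_min f a b (in_M a b IDa IDb u0) u0 u0' ->
     in_MN a b IDa IDb u0 u0 u0' ->
     weak_min f a b (in_MN a b IDa IDb u0) u0 u0').
Proof.
  split.
  - move=> [[Hu0 Hu0N] [eps [Heps Hmin]]]; split=> //.
    exists (eps / 18); split=> [|v v' Hv Hclose]; first lra.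
    apply: Rnot_lt_le => Hlt.
    have [d [Hd [Hdab HPhi]]] := Phi_end_corr_lt a b f v v'
      (neumann_part IDa (v' a)) (neumann_part IDb (v' b)) (Phi f a b u0 u0' - Phi f a b v v')
      hab (proj1 hf) (proj1 Hv) ltac:(lra).
    have Hvd := in_MN_end_corr a b d IDa IDb u0 v v' ltac:(lra) Hv.
    have Hdist := C1dist_end_corr_le a b d IDa IDb u0 u0' v v' ltac:(lra) Hd (proj1 Hv) hu0 Hu0N.
    have := Hmin _ _ Hvd ltac:(lra); lra.
  - move=> [_ [eps [Heps Hmin]]] Hu0; split=> //.
    by exists eps; split=> // v v' [Hv _]; apply: Hmin.
Qed.
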